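(* Fix $\rho>0$, integers $M\ge N\ge1$ and $c_0,\dots,c_{N-1}>0$, and let $C_m$ ($1\le m\le N$) be as defined below. Then for every $1\le m\le N$ and every $A=\mathbf{u}\mathbf{u}^*\in\mathbb{P}^1_N(\overline{D}(0,\rho))$, every principal $m\times m$ submatrix of $$L_m:=C_m\bigl(c_{N-m}\mathbf{1}_{N\times N}+c_{N-m+1}A+\cdots+c_{N-1}A^{\circ(m-1)}\bigr)-A^{\circ(m+M-N)}$$ is positive semidefinite. In particular (case $m=N$) the polynomial $c_0+\cdots+c_{N-1}z^{N-1}-\mathcal{C}(\mathbf{c};z^M;N,\rho)^{-1}z^M$ preserves positivity entrywise on $\mathbb{P}^1_N(\overline{D}(0,\rho))$.
   Context: $\mathbb{P}^1_N(\overline{D}(0,\rho))$ is the set of $N\times N$ positive semidefinite matrices of rank at most one with entries in the closed disc of radius $\rho$; $A^{\circ n}$ is the entrywise power, $A^{\circ0}=\mathbf{1}_{N\times N}$ the all-ones matrix. $C_m:=\sum_{j=0}^{m-1}\binom{M-N+m}{j}^2\binom{M-N+m-j-1}{m-j-1}^2\rho^{m+M-N-j}/c_{N-m+j}$, and $\mathcal{C}(\mathbf{c};z^M;N,\rho):=C_N=\sum_{j=0}^{N-1}\binom{M}{j}^2\binom{M-j-1}{N-j-1}^2\rho^{M-j}/c_j$. *)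

From HB Require Import structures.
From mathcomp Require Import all_boot all_order all_algebra.
Set Implicit Arguments. Unset Strict Implicit. Unset Printing Implicit Defensive.
Import Order.TTheory GRing.Theory Num.Theory.
Local Open Scope ring_scope.

Definition ctrmx (C : numClosedFieldType) m n (A : 'M[C]_(m, n)) : 'M[C]_(n, m) :=
  map_mx Num.conj A^T.

Definition psd (C : numClosedFieldType) n (A : 'M[C]_n) : Prop :=
  ctrmx A = A /\ forall v : 'cV[C]_n, 0 <= (ctrmx v *m A *m v) 0 0.

Definition P1 (C : numClosedFieldType) (N : nat) (rho : C) (A : 'M[C]_N) : Prop :=
  psd A /\ (\rank A <= 1)%N /\ forall i j, `|A i j| <= rho.

(* entrywise (Hadamard) power; hpow A 0 is the all-ones matrix *)
Definition hpow (C : numClosedFieldType) m n (A : 'M[C]_(m, n)) (k : nat) : 'M[C]_(m, n) :=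
  \matrix_(i, j) (A i j) ^+ k.

Definition Cconst (C : numClosedFieldType) (c : nat -> C) (M N : nat) (rho : C) (m : nat) : C :=
  \sum_(j < m)
    ('C(M - N + m, j) ^ 2 * 'C(M - N + m - j - 1, m - j - 1) ^ 2)%:R
      * rho ^+ (m + M - N - j) / c (N - m + j)%N.

Definition Lmat (C : numClosedFieldType) (c : nat -> C) (M N : nat) (rho : C) (m : nat)
    (A : 'M[C]_N) : 'M[C]_N :=
  Cconst c M N rho m *: (\sum_(k < m) c (N - m + k)%N *: hpow A k)
    - hpow A (m + M - N).

Definition fpoly_entrywise (C : numClosedFieldType) (c : nat -> C) (M N : nat) (rho : C)
    (A : 'M[C]_N) : 'M[C]_N :=
  \matrix_(i, j) (\sum_(k < N) c k * (A i j) ^+ k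
                  - (Cconst c M N rho N)^-1 * (A i j) ^+ M).

Arguments Lmat [C] c M N rho m A.
Arguments fpoly_entrywise [C] c M N rho A.
Arguments P1 [C] N rho A.

(* Write A = u u^* with |u_i|^2 <= rho and put x_i = u_(f i).  For a vector v and
   s_k = sum_i conj(v_i) x_i^k, the quadratic form of the submatrix of L_m at v is
   C_m sum_k c_(N-m+k) |s_k|^2 - |s_(m+M-N)|^2.  Reducing z^(m+M-N) modulo the monic
   polynomial prod_i (z - x_i) writes x_i^(m+M-N) = sum_(k<m) d_k x_i^k, hence
   s_(m+M-N) = sum_k d_k s_k, and weighted Cauchy-Schwarz bounds |s_(m+M-N)|^2 by
   (sum_k |d_k|^2 / c_(N-m+k)) sum_k c_(N-m+k) |s_k|^2.  The remainder coefficients d_k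
   are explicit in the elementary and complete symmetric functions of the x_i; bounding
   them by their value when every x_i equals sqrt rho gives exactly
   sum_k |d_k|^2 / c_(N-m+k) <= C_m. *)

Set Warnings "-notation-overridden,-ambiguous-paths,-notation-incompatible-prefix".
From HB Require Import structures.
From mathcomp Require Import all_boot all_order all_algebra.
From mathcomp Require Import zify ring.
Set Implicit Arguments. Unset Strict Implicit. Unset Printing Implicit Defensive.
Import Order.TTheory GRing.Theory Num.Theory.
Local Open Scope ring_scope.

Lemma bin_trinomial (m a b : nat) :
  ('C(a + m, a + b) * 'C(a + b, b) = 'C(m, b) * 'C(a + m, a))%N.
Proof.
have [lt_mb | le_bm] := ltnP m b.
  by rewrite (bin_small lt_mb) (@bin_small (a + m)) ?mul0n //; lia.
have fact_gt0 : (0 < a`! * b`! * (m - b)`!)%N by rewrite !muln_gt0 !fact_gt0.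
apply/eqP; rewrite -(eqn_pmul2r fact_gt0); apply/eqP.
have := bin_fact (_ : a + b <= a + m)%N; have := bin_fact (leq_addl a b).
have := bin_fact le_bm; have := bin_fact (leq_addr m a).
rewrite (_ : a + m - (a + b) = m - b)%N; last lia.
rewrite addnK addKn => fam fbm fab fm.
transitivity ('C(a + m, a + b) * ((a + b)`! * (m - b)`!))%N; first by rewrite -fab; ring.
by rewrite fm; [rewrite -fam -fbm; ring | lia].
Qed.

Section SymmetricFunctions.
Variable C : numClosedFieldType.
Implicit Types (L : seq C) (y z : C) (a b d k : nat).

Fixpoint elem_sym L b : C :=
  match L with
  | [::] => (b == 0)%:R
  | y :: L' => (if b is b'.+1 then y * elem_sym L' b' else 0) + elem_sym L' b
  end.

Fixpoint compl_sym L d : C :=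
  match L with
  | [::] => (d == 0)%:R
  | y :: L' => \sum_(i < d.+1) y ^+ i * compl_sym L' (d - i)
  end.

Fixpoint rem_sym L a b : C :=
  match L with
  | [::] => 0
  | y :: L' => y * elem_sym L' b * compl_sym L a + rem_sym L' a b
  end.

Definition root_poly L z : C :=
  \sum_(k < (size L).+1) (-1) ^+ (size L - k) * elem_sym L (size L - k) * z ^+ k.

Definition rem_coef L a k : C :=
  (-1) ^+ ((size L).-1 - k) * rem_sym L a ((size L).-1 - k).

Definition rem_poly L a z : C := \sum_(k < size L) rem_coef L a k * z ^+ k.

Lemma elem_sym0 L : elem_sym L 0 = 1.
Proof. by elim: L => [|y L IH] //=; rewrite IH add0r. Qed.

Lemma elem_sym_small L b : (size L < b)%N -> elem_sym L b = 0.
Proof.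
elim: L b => [|y L IH] [|b] //= lt_Lb.
by rewrite !IH ?mulr0 ?addr0 //; lia.
Qed.

Lemma rem_sym_small L a b : (size L <= b)%N -> rem_sym L a b = 0.
Proof.
elim: L => [|y L IH] //= le_Lb.
by rewrite elem_sym_small ?IH ?mulr0 ?mul0r ?addr0 //; lia.
Qed.

Lemma compl_sym0 L : compl_sym L 0 = 1.
Proof. by elim: L => [|y L IH] //=; rewrite big_ord1 mul1r. Qed.

Lemma compl_sym_consS y L d :
  compl_sym (y :: L) d.+1 = y * compl_sym (y :: L) d + compl_sym L d.+1.
Proof.
rewrite /= big_ord_recl mul1r subn0 addrC mulr_sumr; congr (_ + _).
by apply: eq_bigr => i _; rewrite exprS subSS mulrA.
Qed.

Lemma compl_sym1 z a : compl_sym [:: z] a = z ^+ a.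
Proof.
by elim: a => [|a IH]; rewrite ?compl_sym0 // compl_sym_consS IH /= addr0 exprS.
Qed.

Lemma compl_symB z y L d :
  compl_sym (z :: L) d.+1 - compl_sym (y :: L) d.+1 = (z - y) * compl_sym [:: z, y & L] d.
Proof.
elim: d => [|d IH]; first by rewrite !compl_sym_consS !compl_sym0; ring.
rewrite (compl_sym_consS z L d.+1) (compl_sym_consS y L d.+1) (compl_sym_consS z (y :: L)).
have -> : compl_sym (z :: L) d.+1 =
  compl_sym (y :: L) d.+1 + (z - y) * compl_sym [:: z, y & L] d by rewrite -IH; ring.
ring.
Qed.

Lemma root_poly_cons y L z : root_poly (y :: L) z = (z - y) * root_poly L z.
Proof.
rewrite {1}/root_poly /=; set n := size L.
rewrite big_ord_recr /= subnn elem_sym0 expr0 add0r !mul1r.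
have split_y : \sum_(i < n.+1) (-1) ^+ (n.+1 - i) *
      ((if (n.+1 - i)%N is b.+1 then y * elem_sym L b else 0) + elem_sym L (n.+1 - i)) * z ^+ i
    = - y * root_poly L z + \sum_(i < n.+1) (-1) ^+ (n.+1 - i) * elem_sym L (n.+1 - i) * z ^+ i.
  rewrite /root_poly mulr_sumr -big_split /=; apply: eq_bigr => i _.
  have -> : (n.+1 - i = (n - i).+1)%N by have := ltn_ord i; lia.
  rewrite exprS; ring.
have shift_z : \sum_(i < n.+1) (-1) ^+ (n.+1 - i) * elem_sym L (n.+1 - i) * z ^+ i + z ^+ n.+1
    = z * root_poly L z.
  rewrite big_ord_recl /= subn0 elem_sym_small // mulr0 mul0r add0r.
  rewrite /root_poly [in RHS]big_ord_recr /= subnn elem_sym0 expr0 !mul1r mulrDr mulr_sumr -exprS.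
  congr (_ + _); apply: eq_bigr => i _; rewrite /bump /= add1n subSS exprS; ring.
by rewrite split_y -addrA shift_z; ring.
Qed.

Lemma root_poly_mem L x : x \in L -> root_poly L x = 0.
Proof.
elim: L => [|y L IH] //; rewrite inE root_poly_cons => /orP [/eqP ->| /IH ->].
  by rewrite subrr mul0r.
by rewrite mulr0.
Qed.

Lemma rem_poly_cons y L a z :
  rem_poly (y :: L) a z = y * compl_sym (y :: L) a * root_poly L z + z * rem_poly L a z.
Proof.
rewrite /rem_poly /rem_coef /root_poly /=; set n := size L.
have -> : \sum_(k < n.+1) (-1) ^+ (n - k) *
      (y * elem_sym L (n - k) * compl_sym (y :: L) a + rem_sym L a (n - k)) * z ^+ k
    = y * compl_sym (y :: L) a * root_poly L z
      + \sum_(k < n.+1) (-1) ^+ (n - k) * rem_sym L a (n - k) * z ^+ k.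
  rewrite /root_poly mulr_sumr -big_split /=; apply: eq_bigr => i _; ring.
congr (_ + _).
rewrite big_ord_recl /= subn0 rem_sym_small // mulr0 mul0r add0r mulr_sumr.
apply: eq_bigr => i _ /=.
rewrite /bump /= add1n exprS (_ : n - i.+1 = n.-1 - i)%N; last lia.
ring.
Qed.

Lemma expr_sub_rem_poly L a z :
  z ^+ (a + size L) - rem_poly L a z = root_poly L z * compl_sym (z :: L) a.
Proof.
elim: L z => [|y L IH] z.
  by rewrite compl_sym1 /rem_poly /root_poly big_ord0 big_ord1 /= addn0 subr0 expr0 !mul1r.
rewrite rem_poly_cons root_poly_cons [size _]/= addnS exprS.
have -> : z ^+ (a + size L) = rem_poly L a z + root_poly L z * compl_sym (z :: L) a.
  by rewrite -IH; ring.
have := compl_symB z y L a; rewrite !compl_sym_consS => shift.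
transitivity (root_poly L z * (z * compl_sym (z :: L) a - y * compl_sym (y :: L) a)).
  by ring.
have -> : z * compl_sym (z :: L) a - y * compl_sym (y :: L) a =
  (z - y) * compl_sym [:: z, y & L] a by rewrite -shift; ring.
ring.
Qed.

Lemma rem_poly_root L a x : x \in L -> x ^+ (a + size L) = rem_poly L a x.
Proof.
move=> xL; apply/eqP; rewrite -subr_eq0; apply/eqP.
by rewrite expr_sub_rem_poly root_poly_mem ?mul0r.
Qed.

End SymmetricFunctions.

Section SymmetricFunctionBounds.
Variables (C : numClosedFieldType) (r : C).
Hypothesis r_ge0 : 0 <= r.
Implicit Types (L : seq C) (a b d k : nat).

Lemma norm_elem_sym_le L b : (forall x, x \in L -> `|x| <= r) ->
  `|elem_sym L b| <= 'C(size L, b)%:R * r ^+ b.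
Proof.
elim: L b => [|y L IH] b L_le.
  by case: b => [|b]; rewrite /= ?normr1 ?expr0 ?mulr1 ?normr0 ?mul0r.
have L'_le x : x \in L -> `|x| <= r by move=> xL; apply: L_le; rewrite inE xL orbT.
case: b => [|b]; first by rewrite elem_sym0 normr1 bin0 expr0 mulr1.
rewrite /= binS natrD mulrDl; apply: (le_trans (ler_normD _ _)).
rewrite addrC lerD ?IH // normrM exprS mulrCA ler_pM ?IH //.
by apply: L_le; rewrite inE eqxx.
Qed.

Lemma norm_compl_sym_le L d : (forall x, x \in L -> `|x| <= r) ->
  `|compl_sym L d| <= 'C(d + size L - 1, d)%:R * r ^+ d.
Proof.
elim: L d => [|y L IH] d L_le.
  case: d => [|d] /=; rewrite ?normr1 ?expr0 ?mulr1 ?normr0 //.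
  by rewrite addn0 subn1 bin_small // mul0r.
have L'_le x : x \in L -> `|x| <= r by move=> xL; apply: L_le; rewrite inE xL orbT.
have y_le : `|y| <= r by apply: L_le; rewrite inE eqxx.
elim: d => [|d IHd]; first by rewrite compl_sym0 normr1 bin0 expr0 mulr1.
rewrite compl_sym_consS /=.
rewrite (_ : d.+1 + (size L).+1 - 1 = (d + size L).+1)%N; last lia.
rewrite (_ : d + (size L).+1 - 1 = d + size L)%N in IHd; last lia.
rewrite binS natrD mulrDl; apply: (le_trans (ler_normD _ _)).
rewrite addrC lerD //.
  by have := IH d.+1 L'_le; rewrite (_ : d.+1 + size L - 1 = d + size L)%N; last lia.
by rewrite normrM exprS mulrCA ler_pM.
Qed.

Lemma norm_rem_sym_le L a b : (forall x, x \in L -> `|x| <= r) ->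
  `|rem_sym L a b| <= ('C(a + size L, a + b + 1) * 'C(a + b, b))%:R * r ^+ (a + b + 1).
Proof.
elim: L => [|y L IH] L_le; first by rewrite normr0 addn0 bin_small ?mul0n ?mul0r //; lia.
have L'_le x : x \in L -> `|x| <= r by move=> xL; apply: L_le; rewrite inE xL orbT.
have y_le : `|y| <= r by apply: L_le; rewrite inE eqxx.
have -> : rem_sym (y :: L) a b = y * elem_sym L b * compl_sym (y :: L) a + rem_sym L a b by [].
rewrite [size _]/=.
have -> : ('C(a + (size L).+1, a + b + 1) * 'C(a + b, b) =
    'C(a + size L, a + b + 1) * 'C(a + b, b) + 'C(size L, b) * 'C(a + size L, a))%N.
  by rewrite addnS addn1 binS mulnDl bin_trinomial.
rewrite natrD mulrDl; apply: (le_trans (ler_normD _ _)); rewrite addrC lerD ?IH //.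
have := norm_compl_sym_le a L_le; rewrite (_ : a + size (y :: L) - 1 = a + size L)%N; last first.
  by rewrite /=; lia.
move=> compl_le.
have -> : ('C(size L, b) * 'C(a + size L, a))%:R * r ^+ (a + b + 1) =
    r * ('C(size L, b)%:R * r ^+ b) * ('C(a + size L, a)%:R * r ^+ a).
  by rewrite natrM -addnA addnC !exprD expr1; ring.
by rewrite !normrM ler_pM ?mulr_ge0 ?ler_pM ?norm_elem_sym_le.
Qed.

Lemma norm_rem_coef_le L a k : (k < size L)%N -> (forall x, x \in L -> `|x| <= r) ->
  `|rem_coef L a k| <=
    ('C(a + size L, k) * 'C(a + size L - k - 1, size L - k - 1))%:R * r ^+ (a + size L - k).
Proof.
move=> lt_kL L_le; rewrite /rem_coef normrM normrX normrN1 expr1n mul1r.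
have := norm_rem_sym_le a ((size L).-1 - k) L_le.
rewrite (_ : a + ((size L).-1 - k) + 1 = a + size L - k)%N; last lia.
rewrite (_ : a + ((size L).-1 - k) = a + size L - k - 1)%N; last lia.
by rewrite (_ : (size L).-1 - k = size L - k - 1)%N ?bin_sub //; lia.
Qed.

End SymmetricFunctionBounds.

Section WeightedCauchySchwarz.
Variable C : numClosedFieldType.

Lemma weighted_cauchy_schwarz n (a s w : 'I_n -> C) : (forall k, 0 < w k) ->
  `|\sum_k a k * s k| ^+ 2 <= (\sum_k `|a k| ^+ 2 / w k) * (\sum_k w k * `|s k| ^+ 2).
Proof.
move=> w_gt0.
set t := \sum_k _; set A := \sum_k _; set B := \sum_k _.
have term_ge0 k : 0 <= `|a k| ^+ 2 / w k by rewrite divr_ge0 ?exprn_ge0 ?normr_ge0 ?ltW ?w_gt0.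
have A_ge0 : 0 <= A by apply: sumr_ge0.
have B_ge0 : 0 <= B by apply: sumr_ge0 => k _; rewrite mulr_ge0 ?exprn_ge0 ?normr_ge0 ?ltW ?w_gt0.
have [A0 | A_neq0] := eqVneq A 0.
  suff a0 k : a k = 0.
    by rewrite /t big1 => [|k _]; rewrite ?a0 ?mul0r // normr0 expr2 mul0r mulr_ge0.
  have /eqP := psumr_eq0P (fun k _ => term_ge0 k) A0 (i := k) isT.
  by rewrite mulf_eq0 invr_eq0 (gt_eqF (w_gt0 k)) orbF sqrf_eq0 normr_eq0 => /eqP.
have A_gt0 : 0 < A by rewrite lt_def A_neq0.
have A_real : A^* = A by rewrite geC0_conj.
(* Expand 0 <= sum_k w_k |s_k - lam conj(a_k) / w_k|^2 at the optimal lam. *)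
pose lam := t / A.
have expand k : w k * `|s k - lam * (a k)^* / w k| ^+ 2 =
    w k * `|s k| ^+ 2 - lam^* * (a k * s k) - lam * (a k * s k)^* + lam * lam^* * (`|a k| ^+ 2 / w k).
  have w_real : (w k)^* = w k by rewrite geC0_conj ?ltW.
  rewrite !normCK !(rmorphB, rmorphM) /= !fmorphV /= conjCK w_real A_real.
  by field; rewrite (gt_eqF (w_gt0 k)) A_neq0.
have : 0 <= B - lam^* * t - lam * t^* + lam * lam^* * A.
  have -> : B - lam^* * t - lam * t^* + lam * lam^* * A =
      \sum_k w k * `|s k - lam * (a k)^* / w k| ^+ 2.
    rewrite (eq_bigr _ (fun k _ => expand k)) !big_split /= !sumrN -!mulr_sumr.
    by rewrite /t rmorph_sum.
  by apply: sumr_ge0 => k _; rewrite mulr_ge0 ?exprn_ge0 ?normr_ge0 ?ltW ?w_gt0.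
have -> : B - lam^* * t - lam * t^* + lam * lam^* * A = B - `|t| ^+ 2 / A.
  by rewrite /lam normCK !rmorphM /= fmorphV /= A_real; field.
by rewrite subr_ge0 -(ler_pM2l A_gt0) mulrCA divff ?mulr1.
Qed.

End WeightedCauchySchwarz.

Section PsdMatrices.
Variable C : numClosedFieldType.

Lemma ctrmxE m n (A : 'M[C]_(m, n)) i j : ctrmx A i j = (A j i)^*.
Proof. by rewrite !mxE. Qed.

Lemma quad_form_sum n (B : 'M[C]_n) (v : 'cV[C]_n) :
  (ctrmx v *m B *m v) 0 0 = \sum_i \sum_j (v i 0)^* * B i j * v j 0.
Proof.
rewrite mxE (eq_bigr (fun j => \sum_i ctrmx v 0 i * B i j * v j 0)); last first.
  by move=> j _; rewrite mxE mulr_suml.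
by rewrite exchange_big; apply: eq_bigr => i _; apply: eq_bigr => j _; rewrite ctrmxE.
Qed.

Lemma psd_diag_ge0 n (A : 'M[C]_n) i : psd A -> 0 <= A i i.
Proof.
by case=> _ /(_ (delta_mx i 0)); rewrite /ctrmx trmx_delta map_delta_mx -rowE -colE !mxE.
Qed.

Lemma psdZ n a (A : 'M[C]_n) : 0 <= a -> psd A -> psd (a *: A).
Proof.
move=> a_ge0 [A_herm A_quad]; split.
  by rewrite /ctrmx linearZ /= map_mxZ /= geC0_conj // -/(ctrmx A) A_herm.
by move=> v; rewrite -scalemxAr -scalemxAl mxE mulr_ge0.
Qed.

Lemma rank_le1_factor m n (A : 'M[C]_(m, n)) : (\rank A <= 1)%N ->
  exists (p : 'I_m -> C) (q : 'I_n -> C), forall i j, A i j = p i * q j.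
Proof.
move=> rk_le1; have := mulmx_base A.
move: (col_base A) (row_base A); case: (\rank A) rk_le1 => [|[|//]] _ P Q <-.
  by exists (fun _ => 0), (fun _ => 0) => i j; rewrite mxE big_ord0 mul0r.
by exists (fun i => P i 0), (fun j => Q 0 j) => i j; rewrite mxE big_ord1.
Qed.

Lemma psd_rank1_factor n (A : 'M[C]_n) : psd A -> (\rank A <= 1)%N ->
  exists u : 'I_n -> C, forall i j, A i j = u i * (u j)^*.
Proof.
move=> A_psd /rank_le1_factor [p [q Apq]].
have A_herm i j : A j i = (A i j)^* by rewrite -{1}(proj1 A_psd) ctrmxE.
have rank1 i j k l : A i j * A k l = A i l * A k j by rewrite !Apq; ring.
have [i0 Ai0_neq0 | diag0] := pickP (fun i => A i i != 0); last first.
  exists (fun _ => 0) => i j; rewrite mul0r; apply/eqP.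
  rewrite -normr_eq0 -sqrf_eq0 normCK -A_herm rank1.
  by move: (diag0 i) (diag0 j) => /= /negbFE/eqP -> _; rewrite mul0r.
have Ai0_gt0 : 0 < A i0 i0 by rewrite lt_def Ai0_neq0 psd_diag_ge0.
pose d := sqrtC (A i0 i0).
have d_neq0 : d != 0 by rewrite sqrtC_eq0.
have d_real : d^* = d by rewrite geC0_conj // sqrtC_ge0 ltW.
exists (fun i => A i i0 / d) => i j.
by rewrite fmorph_div /= d_real -A_herm mulrACA -invfM -expr2 sqrtCK rank1 mulfK.
Qed.

End PsdMatrices.

Section RankOneHadamardPowers.
Variable C : numClosedFieldType.

Definition outer n (x : 'I_n -> C) : 'M[C]_n := \matrix_(i, j) (x i * (x j)^*).

Lemma quad_form_hpow_outer n (x : 'I_n -> C) (v : 'cV[C]_n) k :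
  (ctrmx v *m hpow (outer x) k *m v) 0 0 = `|\sum_i (v i 0)^* * x i ^+ k| ^+ 2.
Proof.
rewrite quad_form_sum normCK rmorph_sum /= mulr_suml; apply: eq_bigr => i _.
rewrite mulr_sumr; apply: eq_bigr => j _.
by rewrite !mxE !rmorphM /= conjCK !rmorphXn /= exprMn; ring.
Qed.

Lemma psd_hpow_outer_comb n (x w d : 'I_n -> C) p (K : C) :
    (forall k, 0 < w k) -> (forall i, x i ^+ p = \sum_k d k * x i ^+ k) ->
    \sum_k `|d k| ^+ 2 / w k <= K ->
  psd (K *: \sum_(k < n) w k *: hpow (outer x) k - hpow (outer x) p).
Proof.
move=> w_gt0 x_p le_K.
have w_real k : (w k)^* = w k by rewrite geC0_conj ?ltW.
have K_real : K^* = K.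
  rewrite geC0_conj // (le_trans _ le_K) // sumr_ge0 // => k _.
  by rewrite divr_ge0 ?exprn_ge0 ?normr_ge0 ?ltW ?w_gt0.
split.
  apply/matrixP => i j; rewrite ctrmxE !mxE !summxE rmorphB rmorphM rmorph_sum /= K_real.
  congr (_ * _ - _); last by rewrite rmorphXn rmorphM /= conjCK mulrC.
  apply: eq_bigr => k _.
  by rewrite !mxE rmorphM /= w_real rmorphXn rmorphM /= conjCK [x i * _]mulrC.
move=> v; pose s k := \sum_i (v i 0)^* * x i ^+ k.
have s_p : s p = \sum_k d k * s k.
  rewrite /s; under eq_bigr do rewrite x_p mulr_sumr.
  rewrite exchange_big /=; apply: eq_bigr => k _.
  by rewrite mulr_sumr; apply: eq_bigr => i _; ring.
have -> : (ctrmx v *m (K *: \sum_(k < n) w k *: hpow (outer x) k - hpow (outer x) p) *m v) 0 0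
    = K * \sum_(k < n) w k * (ctrmx v *m hpow (outer x) k *m v) 0 0
      - (ctrmx v *m hpow (outer x) p *m v) 0 0.
  rewrite mulmxBr mulmxBl -scalemxAr -scalemxAl mulmx_sumr mulmx_suml !mxE summxE.
  by congr (_ * _ - _); apply: eq_bigr => k _; rewrite -scalemxAr -scalemxAl mxE.
under eq_bigr do rewrite quad_form_hpow_outer -/(s _).
rewrite quad_form_hpow_outer -/(s _) s_p subr_ge0.
apply: (le_trans (weighted_cauchy_schwarz _ _ w_gt0)); rewrite ler_wpM2r //.
by apply: sumr_ge0 => k _; rewrite mulr_ge0 ?exprn_ge0 ?normr_ge0 ?ltW ?w_gt0.
Qed.

End RankOneHadamardPowers.

Section PositivityPreserver.
Variables (C : numClosedFieldType) (rho : C) (M N : nat) (c : nat -> C).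
Hypotheses (rho_gt0 : 0 < rho) (le_NM : (N <= M)%N) (c_gt0 : forall j, (j < N)%N -> 0 < c j).

Lemma Cconst_ge_rem_coef m (L : seq C) (r : C) :
    (m <= N)%N -> size L = m -> 0 <= r -> r ^+ 2 = rho -> (forall x, x \in L -> `|x| <= r) ->
  \sum_(k < m) `|rem_coef L (M - N) k| ^+ 2 / c (N - m + k)%N <= Cconst c M N rho m.
Proof.
move=> le_mN size_L r_ge0 r2 L_le; apply: ler_sum => k _.
have lt_km := ltn_ord k.
apply: ler_wpM2r; first by rewrite invr_ge0 ltW // c_gt0 //; lia.
have := norm_rem_coef_le r_ge0 (M - N)%N (_ : (k < size L)%N) L_le.
rewrite size_L => /(_ lt_km) norm_le.
rewrite (_ : m + M - N - k = M - N + m - k)%N; last lia.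
rewrite natrM !natrX -exprMn -r2 -exprM mulnC exprM -exprMn -natrM.
by rewrite ler_pXn2r ?nnegrE ?mulr_ge0 ?exprn_ge0.
Qed.

Lemma Cconst_gt0 m : (0 < m <= N)%N -> 0 < Cconst c M N rho m.
Proof.
case: m => [//|m] /= lt_mN; rewrite /Cconst big_ord_recl /=.
have c_pos k : (k <= m)%N -> 0 < c (N - m.+1 + k)%N by move=> le_km; apply: c_gt0; lia.
rewrite ltr_pwDl ?sumr_ge0 // => [|k _].
  rewrite divr_gt0 ?c_pos // mulr_gt0 ?exprn_gt0 // ltr0n muln_gt0 !expn_gt0 !bin_gt0.
  by apply/andP; split; lia.
by rewrite divr_ge0 ?mulr_ge0 ?ler0n ?exprn_ge0 ?ltW ?c_pos.
Qed.

Lemma mxsub_Lmat_outer m (A : 'M[C]_N) (u : 'I_N -> C) (f : 'I_m -> 'I_N) :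
    (forall i j, A i j = u i * (u j)^*) ->
  mxsub f f (Lmat c M N rho m A) = Cconst c M N rho m *:
    \sum_(k < m) c (N - m + k)%N *: hpow (outer (u \o f)) k - hpow (outer (u \o f)) (m + M - N).
Proof.
move=> Au; apply/matrixP => i j; rewrite !mxE !summxE; congr (_ * _ - _).
  by apply: eq_bigr => k _; rewrite !mxE Au.
by rewrite Au.
Qed.

Lemma psd_mxsub_Lmat m (A : 'M[C]_N) (f : 'I_m -> 'I_N) :
  (m <= N)%N -> P1 N rho A -> psd (mxsub f f (Lmat c M N rho m A)).
Proof.
move=> le_mN [A_psd [A_rk A_bd]].
have [u Au] := psd_rank1_factor A_psd A_rk.
pose r := sqrtC rho; pose x := u \o f; pose L := map x (enum 'I_m).
have r_ge0 : 0 <= r by rewrite sqrtC_ge0 ltW.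
have size_L : size L = m by rewrite size_map size_enum_ord.
have L_le y : y \in L -> `|y| <= r.
  case/mapP => i _ ->; rewrite -(ler_pXn2r (_ : 0 < 2)%N) ?nnegrE // sqrtCK normCK -Au.
  by rewrite -(ger0_norm (psd_diag_ge0 _ A_psd)) A_bd.
rewrite (mxsub_Lmat_outer _ Au).
apply: (psd_hpow_outer_comb (d := rem_coef L (M - N))).
- by move=> k; apply: c_gt0; have := ltn_ord k; lia.
- move=> i; rewrite (_ : m + M - N = M - N + size L)%N; last by rewrite size_L; lia.
  by rewrite rem_poly_root /rem_poly ?size_L // map_f ?mem_enum.
- exact: Cconst_ge_rem_coef size_L r_ge0 (sqrtCK _) L_le.
Qed.

End PositivityPreserver.

Unset Implicit Arguments.
Set Strict Implicit.

Theorem mainTheorem8 (C : numClosedFieldType) (rho : C) (M N : nat) (c : nat -> C) :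
  0 < rho -> (1 <= N)%N -> (N <= M)%N -> (forall j, (j < N)%N -> 0 < c j) ->
  (forall (m : nat) (A : 'M[C]_N), (1 <= m <= N)%N -> P1 N rho A ->
     forall f : 'I_m -> 'I_N, (forall i j : 'I_m, (i < j)%N -> (f i < f j)%N) ->
       psd (mxsub f f (Lmat c M N rho m A)))
  /\
  (forall A : 'M[C]_N, P1 N rho A -> psd (fpoly_entrywise c M N rho A)).
Proof.
move=> rho_gt0 N_gt0 le_NM c_gt0; split.
  by move=> m A /andP [_ le_mN] A_P1 f _; apply: psd_mxsub_Lmat.
move=> A A_P1.
have CN_gt0 : 0 < Cconst c M N rho N by apply: Cconst_gt0; rewrite ?N_gt0 ?leqnn.
have -> : fpoly_entrywise c M N rho A =
    (Cconst c M N rho N)^-1 *: mxsub id id (Lmat c M N rho N A).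
  apply/matrixP => i j; rewrite !mxE subnn addKn mulrBr mulrA mulVf ?gt_eqF ?mul1r //.
  by congr (_ - _); rewrite summxE; apply: eq_bigr => k _; rewrite !mxE.
by apply: psdZ; [rewrite invr_ge0 ltW | apply: psd_mxsub_Lmat].
Qed.
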